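(* Let $\mathbb{K}$ be a perfect field, $\mathbf{u}_1,\dots,\mathbf{u}_t\in\mathbb{K}^{\mathbb{N}^n}$, and assume $J=\mathrm{ann}(\mathbf{u}_1,\dots,\mathbf{u}_t)\subset\mathbb{K}[X_1,\dots,X_n]$ is zero-dimensional. Let $B$ be an integer such that for every $j$ the minimal polynomial of $X_j$ in $\mathbb{K}[X_1,\dots,X_n]/J$ has degree at most $B$. Fix $j\in\{1,\dots,n\}$ and a finite sequence of monomials $\mathscr{B}'_{j+1}$ in $\mathbb{K}[X_{j+1},\dots,X_n]$ (with $\mathscr{B}'_{n+1}=(1)$ if $j=n$), and let $\mathscr{C}_{j+1}=\{b'X_j^k : b'\in\mathscr{B}'_{j+1},\ 0\le k\le B-1\}$. For a finite family $\mathscr{B}$ of monomials in $\mathbb{K}[X_j,\dots,X_n]$, let $\mathsf{M}_{\mathscr{B}}$ be the matrix with rows indexed by pairs $(i,b')$, $1\le i\le t$, $b'\in\mathscr{C}_{j+1}$, columns indexed by $b\in\mathscr{B}$, and entries $\langle\mathbf{u}_i\mid bb'\rangle$. Then: (i) if $\mathscr{B}$ is dependent, the right nullspace of $\mathsf{M}_{\mathscr{B}}$ is non-trivial; (ii) if moreover $j\le n-1$, $\mathscr{B}'_{j+1}=\mathscr{B}_{j+1}$ and $J_j\cap\mathbb{K}[X_{j+1},\dots,X_n]=J_{j+1}$, then conversely, if the right nullspace of $\mathsf{M}_{\mathscr{B}}$ is non-trivial, $\mathscr{B}$ is dependent.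
   Context: For $m\in\mathbb{N}^n$, $\mathbf{X}^m=X_1^{m_1}\cdots X_n^{m_n}$; for a sequence $\mathbf{u}=(u_m)_m$ and $f=\sum_m f_m\mathbf{X}^m$, $\langle\mathbf{u}\mid f\rangle=\sum_m f_mu_m$, $f\cdot\mathbf{u}=(\langle\mathbf{u}\mid\mathbf{X}^mf\rangle)_m$, $\mathrm{ann}(\mathbf{u})$ is the ideal of $f$ with $f\cdot\mathbf{u}=0$ and $\mathrm{ann}(\mathbf{u}_1,\dots,\mathbf{u}_t)=\bigcap_i\mathrm{ann}(\mathbf{u}_i)$ (the same definitions apply to sequences indexed by $\mathbb{N}^{n-j+1}$ and polynomials in $X_j,\dots,X_n$). For $j=1,\dots,n$, $\pi_j(\mathbf{u}_i)$ is the sequence indexed by $\mathbb{N}^{n-j+1}$ with $\langle\pi_j(\mathbf{u}_i)\mid(m_j,\dots,m_n)\rangle=\langle\mathbf{u}_i\mid(0,\dots,0,m_j,\dots,m_n)\rangle$, and $J_j=\mathrm{ann}(\pi_j(\mathbf{u}_1),\dots,\pi_j(\mathbf{u}_t))\subset\mathbb{K}[X_j,\dots,X_n]$. $\mathscr{B}_j$ denotes the set of standard monomials (monomial basis) of $\mathbb{K}[X_j,\dots,X_n]/J_j$ with respect to the lexicographic order $X_j>\cdots>X_n$. A family of monomials in $\mathbb{K}[X_j,\dots,X_n]$ is independent if its images in $\mathbb{K}[X_j,\dots,X_n]/J_j$ are $\mathbb{K}$-linearly independent, and dependent otherwise. *)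

From HB Require Import structures.
From mathcomp Require Import all_boot all_order all_algebra.
From mathcomp Require Import mpoly.
Set Implicit Arguments. Unset Strict Implicit. Unset Printing Implicit Defensive.
Import Order.TTheory GRing.Theory.
Local Open Scope ring_scope.

(* Conventions: variables X_1..X_n of the paper are 'X_0 .. 'X_(n-1) here;
   a sequence indexed by N^n is a function 'X_{1..n} -> K (multinomials are
   n-tuples of nat). The paper's index j (1 <= j <= n) corresponds to
   j0 : 'I_n with j = j0+1. The subring K[X_j,...,X_n] of K[X_1..X_n] is
   the set of polynomials whose monomials have zero exponent in the
   variables of index < j0 (0-based); this is the canonical identification. *)

Definition perfect_field (K : fieldType) : Prop :=
  forall p : nat, p \in [pchar K] -> forall x : K, exists y : K, y ^+ p = x.

Section Defs.
Variables (K : fieldType) (n : nat).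

Definition pairing (u : 'X_{1..n} -> K) (f : {mpoly K[n]}) : K :=
  \sum_(m <- msupp f) f@_m * u m.

Definition in_ann (t : nat) (u : 'I_t -> 'X_{1..n} -> K) (f : {mpoly K[n]}) : Prop :=
  forall (i : 'I_t) (m : 'X_{1..n}), pairing (u i) ('X_[m] * f) = 0.

Definition mnm_from (k : nat) (m : 'X_{1..n}) : Prop :=
  forall l : 'I_n, (l < k)%N -> m l = 0%N.

Definition poly_from (k : nat) (f : {mpoly K[n]}) : Prop :=
  forall m, m \in msupp f -> mnm_from k m.

(* J_{k+1} = ann(pi_{k+1}(u_1),...,pi_{k+1}(u_t)) seen inside K[X_1..X_n]:
   <pi(u) | X^m f> = <u | X^m f> for m, f in the subring. *)
Definition in_Jsub (t : nat) (u : 'I_t -> 'X_{1..n} -> K) (k : nat)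
    (f : {mpoly K[n]}) : Prop :=
  poly_from k f /\
  forall (i : 'I_t) (m : 'X_{1..n}), mnm_from k m ->
    pairing (u i) ('X_[m] * f) = 0.

Definition zero_dimensional (J : {mpoly K[n]} -> Prop) : Prop :=
  exists S : seq {mpoly K[n]}, forall f : {mpoly K[n]},
    exists c : 'I_(size S) -> K, J (f - \sum_(k < size S) c k *: S`_k).

Definition peval (p : {poly K}) (j : 'I_n) : {mpoly K[n]} :=
  \sum_(k < size p) p`_k *: 'X_j ^+ k.

Definition is_minpoly (J : {mpoly K[n]} -> Prop) (j : 'I_n) (p : {poly K}) : Prop :=
  p \is monic /\ J (peval p j) /\
  forall q : {poly K}, q != 0 -> J (peval q j) -> (size p <= size q)%N.

Definition lex_lt (m m' : 'X_{1..n}) : Prop :=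
  exists i : 'I_n, (forall l : 'I_n, (l < i)%N -> m l = m' l) /\ (m i < m' i)%N.

Definition standard_mnm (t : nat) (u : 'I_t -> 'X_{1..n} -> K) (k : nat)
    (b : 'X_{1..n}) : Prop :=
  mnm_from k b /\
  ~ (exists f : {mpoly K[n]}, [/\ in_Jsub u k f, f != 0, b \in msupp f &
        forall m, m \in msupp f -> m != b -> lex_lt m b]).

Definition dependent_fam (t : nat) (u : 'I_t -> 'X_{1..n} -> K) (k : nat)
    (B : seq 'X_{1..n}) : Prop :=
  exists c : 'I_(size B) -> K, (exists l, c l != 0) /\
    in_Jsub u k (\sum_(l < size B) c l *: 'X_[nth 0%MM B l]).

Definition Cfam (j : 'I_n) (bound : nat) (B' : seq 'X_{1..n}) : seq 'X_{1..n} :=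
  [seq mnm_add b' (mnm_muln (mnm1 j) e) | b' <- B', e <- iota 0 bound].

Definition Mmat (t : nat) (u : 'I_t -> 'X_{1..n} -> K) (C B : seq 'X_{1..n}) :
    'M[K]_(#|{: 'I_t * 'I_(size C)}|, size B) :=
  \matrix_(r, l)
    let ic : 'I_t * 'I_(size C) := enum_val r in
    pairing (u ic.1) 'X_[mnm_add (nth 0%MM B l) (nth 0%MM C (nat_of_ord ic.2))].

Definition nontrivial_nullspace (p q : nat) (M : 'M[K]_(p, q)) : Prop :=
  exists v : 'cV[K]_q, v != 0 /\ M *m v = 0.

End Defs.

(* For a polynomial f and a sequence u write f.u for the sequence m |-> <u | X^m f>,
   so that <f.u | g> = <u | g f>. Applying M_B to a coefficient vector c evaluates
   (sum_b c_b b).u_i on C_{j+1}, which gives (i) at once. For (ii), let w := f.u_i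
   vanish on C_{j+1}; we show that w vanishes on every monomial b' X_j^e of
   K[X_j,...,X_n]. For e < B, induct on b' along the lexicographic order, which is well
   founded: either b' is standard, hence in B_{j+1}, or it is the leading monomial of
   some g in J_{j+1}, a subset of J_j, and <w | X_j^e g> = 0 expresses w(b' X_j^e)
   through values at lex-smaller monomials. For e >= B, the minimal polynomial of X_j
   modulo J, which exists because K[X]/J is finite dimensional and has degree at most
   B, gives a linear recurrence in e with B vanishing initial values. *)

From HB Require Import structures.
From mathcomp Require Import all_boot all_order all_algebra.
From mathcomp Require Import bigenough mpoly ssrcomplements.
From Stdlib Require Import Classical.
Set Implicit Arguments. Unset Strict Implicit. Unset Printing Implicit Defensive.
Import Order.TTheory GRing.Theory BigEnough.
Local Open Scope ring_scope.

Section Pairing.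
Variables (K : fieldType) (n : nat).
Implicit Types (u w : 'X_{1..n} -> K) (f g : {mpoly K[n]}) (m : 'X_{1..n}).

Lemma pairing_bigE u f i : (msize f <= i)%N ->
  pairing u f = \sum_(m : 'X_{1..n < i}) f@_m * u m.
Proof.
move=> le_fi; rewrite /pairing (big_mksub 'X_{1..n < i}) ?msupp_uniq //=.
  by rewrite big_rmcond //= => m /memN_msupp_eq0 ->; rewrite mul0r.
by move=> m /msize_mdeg_lt /leq_trans; apply.
Qed.

Lemma pairing_is_linear u : linear_for *%R (pairing u).
Proof.
move=> a f g; pose_big_enough i.
  rewrite !(pairing_bigE u (i := i)) // mulr_sumr -big_split /=.
  by apply: eq_bigr => m _; rewrite mcoeffD mcoeffZ mulrDl mulrA.
by close.
Qed.

HB.instance Definition _ u :=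
  GRing.isLinear.Build K {mpoly K[n]} K *%R (pairing u) (pairing_is_linear u).

Lemma pairingX u m : pairing u 'X_[m] = u m.
Proof. by rewrite /pairing msuppX big_seq1 mcoeffX eqxx mul1r. Qed.

Definition act f u m := pairing u ('X_[m] * f).

Lemma pairing_act f u g : pairing (act f u) g = pairing u (g * f).
Proof.
rewrite {2}(mpolyE g) mulr_suml linear_sum /=; apply: eq_bigr => m _.
by rewrite -scalerAl linearZ.
Qed.

Lemma act_sumX (I : Type) (r : seq I) (c : I -> K) (mI : I -> 'X_{1..n}) u m :
  act (\sum_(i <- r) c i *: 'X_[mI i]) u m = \sum_(i <- r) c i * u (m + mI i)%MM.
Proof.
rewrite /act mulr_sumr linear_sum; apply: eq_bigr => i _.
by rewrite -scalerAr linearZ /= -mpolyXD pairingX.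
Qed.

Lemma actC f g u m : act f (act g u) m = act g (act f u) m.
Proof. by rewrite /act !pairing_act -!mulrA [f * g]mulrC. Qed.

End Pairing.

Lemma ex_minn_prop (P : nat -> Prop) :
  (exists k, P k) -> exists k, P k /\ forall k', P k' -> (k <= k')%N.
Proof.
move=> [k Pk]; elim/ltn_ind: k Pk => k IH Pk.
have [[k' Pk' lt_k'k]|no_smaller] := classic (exists2 k', P k' & (k' < k)%N).
  exact: IH lt_k'k Pk'.
exists k; split=> // k' Pk'; rewrite leqNgt; apply/negP => lt_k'k.
by apply: no_smaller; exists k'.
Qed.

Section MinimalPolynomial.
Variables (K : fieldType) (n : nat) (J : {mpoly K[n]} -> Prop).
Hypotheses (J0 : J 0) (J_lin : forall a f g, J f -> J g -> J (a *: f + g)).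

Lemma J_scale a f : J f -> J (a *: f).
Proof. by move=> Jf; rewrite -[_ *: f]addr0; apply: J_lin. Qed.

Lemma J_sum (I : Type) (r : seq I) (F : I -> {mpoly K[n]}) :
  (forall i, J (F i)) -> J (\sum_(i <- r) F i).
Proof.
move=> JF; apply: big_ind => // f g Jf Jg.
by rewrite -[f]scale1r; apply: J_lin.
Qed.

Lemma peval_widen (p : {poly K}) (j : 'I_n) N : (size p <= N)%N ->
  peval p j = \sum_(k < N) p`_k *: 'X_j ^+ k.
Proof.
move=> le_pN; rewrite /peval (big_ord_widen N (fun k => p`_k *: 'X_j ^+ k) le_pN).
rewrite big_mkcond; apply: eq_bigr => k _; case: ltnP => // le_pk.
by rewrite nth_default // scale0r.
Qed.

Lemma pevalZ (p : {poly K}) (j : 'I_n) a : peval (a *: p) j = a *: peval p j.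
Proof.
rewrite (@peval_widen _ _ (size p)) ?size_scale_leq // /peval scaler_sumr.
by apply: eq_bigr => k _; rewrite coefZ scalerA.
Qed.

Lemma zero_dimensional_annihilating_poly (j : 'I_n) :
  zero_dimensional J -> exists2 q : {poly K}, q != 0 & J (peval q j).
Proof.
move=> [S spanS]; pose N := size S.
have [C XjC] : exists C : 'I_N.+1 -> 'I_N -> K, forall a : 'I_N.+1,
    J ('X_j ^+ a - \sum_(k < N) C a k *: S`_k).
  exact: fin_all_exists (fun a : 'I_N.+1 => spanS ('X_j ^+ a)).
pose A : 'M[K]_(N.+1, N) := \matrix_(a, k) C a k.
have /rowV0Pn[w /sub_kermxP wA w0] : kermx A != 0.
  by rewrite kermx_eq0 /row_free neq_ltn (leq_ltn_trans (rank_leq_col A)).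
exists (rVpoly w); first by rewrite raddf_eq0 //; apply: can_inj rVpolyK.
have -> : peval (rVpoly w) j =
    \sum_(a < N.+1) w 0 a *: ('X_j ^+ a - \sum_(k < N) C a k *: S`_k).
  have wS : \sum_(a < N.+1) w 0 a *: \sum_(k < N) C a k *: S`_k = 0.
    under eq_bigr => a _ do rewrite scaler_sumr.
    rewrite exchange_big big1 //= => k _.
    under eq_bigr => a _ do rewrite scalerA.
    have wAk : \sum_a w 0 a * C a k = 0.
      have /matrixP/(_ 0 k) := wA; rewrite !mxE => wAk; rewrite -[RHS]wAk.
      by apply: eq_bigr => a _; rewrite mxE.
    by rewrite -scaler_suml wAk scale0r.
  under [RHS]eq_bigr => a _ do rewrite scalerBr.
  rewrite sumrB wS subr0 (@peval_widen _ _ N.+1) ?size_poly //.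
  by apply: eq_bigr => a _; rewrite coef_rVpoly_ord.
by apply: J_sum => a; apply: J_scale.
Qed.

Lemma minpoly_exists (j : 'I_n) :
  zero_dimensional J -> exists p, is_minpoly J j p.
Proof.
move=> /(zero_dimensional_annihilating_poly j)[q q0 Jq].
pose annihilating_size d :=
  exists p : {poly K}, [/\ p != 0, J (peval p j) & size p = d].
have [_ [[p [p0 Jp <-]] min_p]] : exists d, annihilating_size d /\
    forall d', annihilating_size d' -> (d <= d')%N.
  by apply: ex_minn_prop; exists (size q), q.
have lp0 : lead_coef p != 0 by rewrite lead_coef_eq0.
exists ((lead_coef p)^-1 *: p); split; [|split].
- by rewrite monicE lead_coefZ mulVf.
- by rewrite pevalZ; apply: J_scale.
- move=> q' q'0 Jq'; rewrite size_scale ?invr_eq0 //.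
  by apply: min_p; exists q'.
Qed.

End MinimalPolynomial.

Lemma monic_recurrence_eq0 (R : nzRingType) (p : {poly R}) (a : nat -> R) :
  p \is monic ->
  (forall e, (e < (size p).-1)%N -> a e = 0) ->
  (forall e, \sum_(k < size p) p`_k * a (e + k)%N = 0) ->
  forall e, a e = 0.
Proof.
move=> mon_p a_init a_rec; elim/ltn_ind=> e IH.
have [|le_de] := ltnP e (size p).-1; first exact: a_init.
have := a_rec (e - (size p).-1)%N.
rewrite -(prednK (_ : 0 < size p)%N) ?size_poly_gt0 ?monic_neq0 //.
rewrite big_ord_recr /= big1 ?add0r.
  by rewrite -lead_coefE (monicP mon_p) mul1r subnK.
by move=> k _; rewrite IH ?mulr0 // -[X in (_ < X)%N](subnK le_de) ltn_add2l.
Qed.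

Section Lex.
Variable n : nat.

Lemma lex_ltP (m m' : 'X_{1..n}) :
  lex_lt m m' <-> ((multinom_val m : n.-tuplelexi nat) < multinom_val m')%O.
Proof.
split=> [[i [eqm ltm]]|/ltxi_tuplePlt[i eqm ltm]]; last by exists i.
by apply/ltxi_tuplePlt; exists i.
Qed.

Lemma lex_lt_wf : well_founded (@lex_lt n).
Proof.
move=> [m]; elim/(@ltxwf _ nat): m => [P IH x|m IH].
  by elim/ltn_ind: x => x IHx; apply: IH => y; rewrite ltEnat; apply: IHx.
by constructor=> -[m'] /lex_ltP; apply: IH.
Qed.

End Lex.

Definition lex_reducible (K : fieldType) (n : nat) (P : {mpoly K[n]} -> Prop)
    (Q : 'X_{1..n} -> Prop) (m : 'X_{1..n}) : Prop :=
  exists g, [/\ P g, m \in msupp g &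
    forall m', m' \in msupp g -> m' != m -> Q m' /\ lex_lt m' m].

Lemma lex_reduction_eq0 (K : fieldType) (n : nat) (w : 'X_{1..n} -> K)
    (P : {mpoly K[n]} -> Prop) (Q : 'X_{1..n} -> Prop) (S : seq 'X_{1..n}) :
  (forall b, b \in S -> w b = 0) ->
  (forall g, P g -> pairing w g = 0) ->
  (forall m, Q m -> m \notin S -> lex_reducible P Q m) ->
  forall m, Q m -> w m = 0.
Proof.
move=> wS wP reducible; elim/(well_founded_ind (@lex_lt_wf n)) => m IH Qm.
have [/wS //|mS] := boolP (m \in S).
have [g [Pg mg lower]] := reducible m Qm mS.
have gm0 : g@_m != 0 by rewrite -mcoeff_msupp.
have := wP g Pg; rewrite /pairing (bigD1_seq m) ?msupp_uniq //= big1_seq ?addr0.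
  by move=> /eqP; rewrite mulf_eq0 (negbTE gm0) => /eqP.
move=> m' /andP[m'm m'g]; have [Qm' ltm'm] := lower m' m'g m'm.
by rewrite IH ?mulr0.
Qed.

Section Monomials.
Variable n : nat.
Implicit Types (m : 'X_{1..n}) (k : nat).

Lemma mnm_fromD k m1 m2 :
  mnm_from k m1 -> mnm_from k m2 -> mnm_from k (m1 + m2)%MM.
Proof. by move=> from1 from2 l lt_lk; rewrite mnmDE from1 ?from2. Qed.

Lemma mnm_from_mulU k (j : 'I_n) e : (k <= j)%N -> mnm_from k (U_(j) *+ e)%MM.
Proof.
move=> le_kj l lt_lk; rewrite mulmnE mnm1E.
by case: eqP => [jl|]; rewrite ?mul0n // -jl ltnNge le_kj in lt_lk.
Qed.

Lemma mnm_from_le k1 k2 m : (k1 <= k2)%N -> mnm_from k2 m -> mnm_from k1 m.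
Proof. by move=> le_k12 from2 l lt_lk1; apply: from2; apply: leq_trans le_k12. Qed.

Lemma mnm_from_split (j : 'I_n) m : mnm_from j m ->
  exists2 m', mnm_from j.+1 m' & m = (m' + U_(j) *+ m j)%MM.
Proof.
move=> from_m; exists [multinom if l == j then 0%N else m l | l < n].
  move=> l lt_lj; rewrite mnmE; case: eqP => // /eqP ne_lj; apply: from_m.
  by rewrite ltn_neqAle ne_lj -ltnS.
apply/mnmP => l; rewrite mnmDE mulmnE mnm1E mnmE eq_sym.
by case: eqP => [->|_]; rewrite ?mul1n ?mul0n ?addn0.
Qed.

Lemma mulmnDr m e1 e2 : (m *+ (e1 + e2) = m *+ e1 + m *+ e2)%MM.
Proof. by apply/mnmP => l; rewrite mnmDE !mulmnE mulnDr. Qed.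

Lemma Cfam_from (j : 'I_n) bound B' : (forall b', b' \in B' -> mnm_from j.+1 b') ->
  forall c, c \in Cfam j bound B' -> mnm_from j c.
Proof.
move=> fromB' c /allpairsP[[b' e] /= [b'B' _ ->]].
by apply: mnm_fromD; [apply: mnm_from_le (fromB' _ b'B') | apply: mnm_from_mulU].
Qed.

End Monomials.

Section Annihilators.
Variables (K : fieldType) (n t : nat) (u : 'I_t -> 'X_{1..n} -> K).
Implicit Types (f g : {mpoly K[n]}) (w : 'X_{1..n} -> K) (m M : 'X_{1..n}).

Lemma actX m w M : act 'X_[m] w M = w (M + m)%MM.
Proof. by rewrite /act -mpolyXD pairingX. Qed.

Lemma actE f w M : act f w M = \sum_(m <- msupp f) f@_m * w (M + m)%MM.
Proof. by rewrite {1}(mpolyE f) act_sumX. Qed.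

Lemma act_peval (p : {poly K}) (j : 'I_n) w M :
  act (peval p j) w M = \sum_(k < size p) p`_k * w (M + U_(j) *+ k)%MM.
Proof. by rewrite /peval; under eq_bigr do rewrite mpolyXn; rewrite act_sumX. Qed.

Lemma in_ann0 : in_ann u 0.
Proof. by move=> i m; rewrite mulr0 linear0. Qed.

Lemma in_ann_lin a f g : in_ann u f -> in_ann u g -> in_ann u (a *: f + g).
Proof.
by move=> ann_f ann_g i m; rewrite mulrDr -scalerAr linearP /= ann_f ann_g mulr0 addr0.
Qed.

Lemma act_in_ann_eq0 f g i M : in_ann u g -> act g (act f (u i)) M = 0.
Proof. by move=> ann_g; rewrite actC actE big1 // => m _; rewrite /act ann_g mulr0. Qed.

Lemma act_in_Jsub_eq0 (k : nat) f g i M :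
  poly_from k f -> in_Jsub u k g -> mnm_from k M -> act g (act f (u i)) M = 0.
Proof.
move=> from_f [_ Jg] from_M; rewrite actC actE big1_seq // => m /andP[_ mf].
by rewrite /act Jg ?mulr0 //; apply: mnm_fromD => //; apply: from_f.
Qed.

Definition lincomb (B : seq 'X_{1..n}) (c : 'I_(size B) -> K) : {mpoly K[n]} :=
  \sum_(l < size B) c l *: 'X_[nth 0%MM B l].
Arguments lincomb : clear implicits.

Lemma poly_from_lincomb k (B : seq 'X_{1..n}) (c : 'I_(size B) -> K) :
  (forall b, b \in B -> mnm_from k b) -> poly_from k (lincomb B c).
Proof.
move=> fromB m /msupp_sum_le/flattenP[s /mapP[l _ ->]] /msuppZ_le.
by rewrite msuppX inE => /eqP ->; apply/fromB/mem_nth.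
Qed.

Lemma Mmat_mul_col (C B : seq 'X_{1..n}) (c : 'I_(size B) -> K) r :
  (Mmat u C B *m \col_l c l) r 0 =
  act (lincomb B c) (u (enum_val r).1) (nth 0%MM C (enum_val r).2).
Proof.
rewrite mxE /lincomb act_sumX; apply: eq_bigr => l _.
by rewrite !mxE /= pairingX mulrC addmC.
Qed.

Lemma nullspace_MmatP (C B : seq 'X_{1..n}) : nontrivial_nullspace (Mmat u C B) <->
  exists c : 'I_(size B) -> K, (exists l, c l != 0) /\
    forall i x, x \in C -> act (lincomb B c) (u i) x = 0.
Proof.
split=> [[v [v0 Mv]]|[c [[l cl0] c_null]]].
  have {}Mv r : (Mmat u C B *m \col_l v l 0) r 0 = 0.
    have -> : \col_l v l 0 = v by apply/colP => l; rewrite mxE.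
    by rewrite Mv mxE.
  exists (fun l => v l 0); split.
    apply/existsP; apply: contraNT v0 => /existsPn v_eq0.
    by apply/eqP/colP => l; rewrite mxE; apply/eqP/negbNE/v_eq0.
  move=> i x xC; have xC' : (index x C < size C)%N by rewrite index_mem.
  have := Mv (enum_rank ((i, Ordinal xC') : 'I_t * 'I_(size C))).
  by rewrite Mmat_mul_col enum_rankK /= nth_index.
exists (\col_l c l); split.
  by apply: contraNneq cl0 => /colP/(_ l); rewrite !mxE => ->.
by apply/colP => r; rewrite Mmat_mul_col mxE c_null // mem_nth.
Qed.

Lemma nonstandard_lex_reducible (k : nat) m :
  (forall g, in_Jsub u k.+1 g -> in_Jsub u k g) ->
  mnm_from k.+1 m -> ~ standard_mnm u k.+1 m ->
  lex_reducible (in_Jsub u k) (mnm_from k.+1) m.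
Proof.
move=> sub_J from_m nonstd.
have [g [Jg _ mg lower]] : exists g, [/\ in_Jsub u k.+1 g, g != 0, m \in msupp g &
    forall m', m' \in msupp g -> m' != m -> lex_lt m' m].
  by apply: NNPP => no_g; apply: nonstd.
exists g; split=> // [|m' m'g ne_m'm]; first exact: sub_J.
by split; [exact: Jg.1 | exact: lower].
Qed.

Lemma act_eq0_of_Cfam (j : 'I_n) bound B' f i (p : {poly K}) :
  poly_from j f -> p \is monic -> ((size p).-1 <= bound)%N ->
  in_ann u (peval p j) ->
  (forall m, mnm_from j.+1 m -> m \notin B' ->
     lex_reducible (in_Jsub u j) (mnm_from j.+1) m) ->
  (forall x, x \in Cfam j bound B' -> act f (u i) x = 0) ->
  forall m, mnm_from j m -> act f (u i) m = 0.
Proof.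
move=> from_f mon_p le_pb ann_p reducible f_C.
have act_low e m' : (e < bound)%N -> mnm_from j.+1 m' ->
    act f (u i) (m' + U_(j) *+ e)%MM = 0.
  move=> lt_eb; rewrite -actX; move: m'.
  apply: (lex_reduction_eq0 (S := B') (P := in_Jsub u j)) => // [b' b'B'|g Jg].
    by rewrite actX; apply/f_C/allpairs_f; rewrite ?mem_iota.
  rewrite pairing_act mulrC.
  exact (act_in_Jsub_eq0 i from_f Jg (mnm_from_mulU e (leqnn j))).
move=> m /mnm_from_split[m' from_m' ->].
apply: (monic_recurrence_eq0 (a := fun e => act f (u i) (m' + U_(j) *+ e)%MM) mon_p).
  by move=> e lt_ep; apply: act_low => //; apply: leq_trans le_pb.
move=> e; have := act_in_ann_eq0 f i (m' + U_(j) *+ e)%MM ann_p.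
rewrite act_peval => recurrence; rewrite -[RHS]recurrence.
by apply: eq_bigr => k _; rewrite -addmA -mulmnDr.
Qed.

End Annihilators.

Theorem lemma4 (K : fieldType) (n t : nat) (u : 'I_t -> 'X_{1..n} -> K)
    (bound : nat) (j : 'I_n) (B' : seq 'X_{1..n}) :
  perfect_field K ->
  zero_dimensional (in_ann u) ->
  (forall (k : 'I_n) (p : {poly K}), is_minpoly (in_ann u) k p ->
      ((size p).-1 <= bound)%N) ->
  (forall b', b' \in B' -> mnm_from j.+1 b') ->
  (j.+1 = n -> B' = [:: 0%MM]) ->
  forall B : seq 'X_{1..n}, (forall b, b \in B -> mnm_from j b) ->
  (dependent_fam u j B ->
     nontrivial_nullspace (Mmat u (Cfam j bound B') B))
  /\
  ((j.+1 < n)%N ->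
   (forall b, b \in B' <-> standard_mnm u j.+1 b) ->
   (forall f, (in_Jsub u j f /\ poly_from j.+1 f) <-> in_Jsub u j.+1 f) ->
   nontrivial_nullspace (Mmat u (Cfam j bound B') B) ->
   dependent_fam u j B).
Proof.
(* Neither perfectness of K nor the hypotheses comparing [j.+1] with [n] are needed. *)
move=> _ zero_dim deg_minpoly fromB' _ B fromB.
split=> [[c [c_nz [_ Jc]]]|_ std J_restr /nullspace_MmatP[c [c_nz c_null]]].
  apply/nullspace_MmatP; exists c; split=> // i x /(Cfam_from fromB').
  exact: Jc.
have [p minp] := minpoly_exists (@in_ann0 _ _ _ u) (@in_ann_lin _ _ _ u) j zero_dim.
have [mon_p [ann_p _]] := minp.
have reducible m : mnm_from j.+1 m -> m \notin B' ->
    lex_reducible (in_Jsub u j) (mnm_from j.+1) m.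
  move=> from_m mB'; apply: nonstandard_lex_reducible => // [g /J_restr[]//|].
  by move=> /std; apply/negP.
have from_f := poly_from_lincomb (c := c) fromB.
exists c; split=> //; split=> // i.
exact (act_eq0_of_Cfam from_f mon_p (deg_minpoly j p minp) ann_p reducible (c_null i)).
Qed.
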